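(* Let $\mathcal{A}$ and $\mathcal{B}$ be monoidal categories (not necessarily strict). Then $\mathcal{A}$ and $\mathcal{B}$ are monoidally equivalent if and only if there exist a monoidal category $\mathcal{C}$ and strict monoidal functors $P\colon \mathcal{C}\to\mathcal{A}$ and $Q\colon\mathcal{C}\to\mathcal{B}$ each of which is a surjective equivalence.
   Context: Monoidal categories $\mathcal{A},\mathcal{B}$ are monoidally equivalent if there exist strong monoidal functors $F\colon\mathcal{A}\to\mathcal{B}$, $G\colon\mathcal{B}\to\mathcal{A}$ and monoidal natural isomorphisms $1_{\mathcal{A}}\cong GF$ and $FG\cong 1_{\mathcal{B}}$. A strict monoidal functor is a monoidal functor whose coherence maps are identities, so that e.g. $P(c\otimes c') = P(c)\otimes P(c')$ and $P(I)=I$ as objects (the monoidal categories themselves need not be strict). A functor is a surjective equivalence if it is surjective on objects (genuinely), full, and faithful. *)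

Set Implicit Arguments.
Unset Strict Implicit.

Record Category := {
  ob :> Type;
  hom : ob -> ob -> Type;
  idm : forall a : ob, hom a a;
  comp : forall a b c : ob, hom b c -> hom a b -> hom a c;
  comp_idl : forall a b (f : hom a b), comp (idm b) f = f;
  comp_idr : forall a b (f : hom a b), comp f (idm a) = f;
  comp_assoc : forall a b c d (f : hom a b) (g : hom b c) (h : hom c d),
      comp h (comp g f) = comp (comp h g) f
}.
Arguments hom {C} a b : rename.
Arguments idm {C} a : rename.
Arguments comp {C a b c} g f : rename.

Infix "∘" := comp (at level 40, left associativity).

Definition is_iso (C : Category) (a b : C) (f : hom a b) : Prop :=
  exists g : hom b a, g ∘ f = idm a /\ f ∘ g = idm b.

Definition eq_hom (C : Category) (a b : C) (e : a = b) : hom a b :=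
  match e in _ = y return hom a y with eq_refl => idm a end.

Record MonCat := {
  mcat :> Category;
  tens : mcat -> mcat -> mcat;
  tensm : forall a a' b b' : mcat, hom a a' -> hom b b' -> hom (tens a b) (tens a' b');
  munit : mcat;
  assoc : forall a b c : mcat, hom (tens (tens a b) c) (tens a (tens b c));
  lunit : forall a : mcat, hom (tens munit a) a;
  runit : forall a : mcat, hom (tens a munit) a;
  tensm_id : forall a b : mcat, tensm (idm a) (idm b) = idm (tens a b);
  tensm_comp : forall a a' a'' b b' b'' (f : hom a a') (f' : hom a' a'')
                 (g : hom b b') (g' : hom b' b''),
      tensm (f' ∘ f) (g' ∘ g) = tensm f' g' ∘ tensm f g;
  assoc_nat : forall a a' b b' c c' (f : hom a a') (g : hom b b') (h : hom c c'),
      assoc a' b' c' ∘ tensm (tensm f g) h = tensm f (tensm g h) ∘ assoc a b c;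
  lunit_nat : forall a a' (f : hom a a'),
      lunit a' ∘ tensm (idm munit) f = f ∘ lunit a;
  runit_nat : forall a a' (f : hom a a'),
      runit a' ∘ tensm f (idm munit) = f ∘ runit a;
  assoc_iso : forall a b c, is_iso (assoc a b c);
  lunit_iso : forall a, is_iso (lunit a);
  runit_iso : forall a, is_iso (runit a);
  pentagon : forall a b c d,
      assoc a b (tens c d) ∘ assoc (tens a b) c d
      = tensm (idm a) (assoc b c d) ∘ assoc a (tens b c) d ∘ tensm (assoc a b c) (idm d);
  triangle : forall a b,
      tensm (idm a) (lunit b) ∘ assoc a munit b = tensm (runit a) (idm b)
}.
Arguments tens {M} a b : rename.
Arguments tensm {M a a' b b'} f g : rename.
Arguments munit {M} : rename.
Arguments assoc {M} a b c : rename.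
Arguments lunit {M} a : rename.
Arguments runit {M} a : rename.

Record MonFunData (A B : MonCat) := {
  fobj :> A -> B;
  fmap : forall a a' : A, hom a a' -> hom (fobj a) (fobj a');
  phi : forall a b : A, hom (tens (fobj a) (fobj b)) (fobj (tens a b));
  phi0 : hom (@munit B) (fobj munit)
}.
Arguments fmap {A B} F {a a'} f : rename.
Arguments phi {A B} F a b : rename.
Arguments phi0 {A B} F : rename.

Definition is_monoidal_functor (A B : MonCat) (F : MonFunData A B) : Prop :=
  (forall a : A, fmap F (idm a) = idm (F a)) /\
  (forall (a b c : A) (f : hom a b) (g : hom b c), fmap F (g ∘ f) = fmap F g ∘ fmap F f) /\
  (forall (a a' b b' : A) (f : hom a a') (g : hom b b'),
      fmap F (tensm f g) ∘ phi F a b = phi F a' b' ∘ tensm (fmap F f) (fmap F g)) /\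
  (forall a b c : A,
      fmap F (assoc a b c) ∘ phi F (tens a b) c ∘ tensm (phi F a b) (idm (F c))
      = phi F a (tens b c) ∘ tensm (idm (F a)) (phi F b c) ∘ assoc (F a) (F b) (F c)) /\
  (forall a : A,
      fmap F (lunit a) ∘ phi F munit a ∘ tensm (phi0 F) (idm (F a)) = lunit (F a)) /\
  (forall a : A,
      fmap F (runit a) ∘ phi F a munit ∘ tensm (idm (F a)) (phi0 F) = runit (F a)).

Definition is_strong_monoidal_functor (A B : MonCat) (F : MonFunData A B) : Prop :=
  is_monoidal_functor F /\ (forall a b : A, is_iso (phi F a b)) /\ is_iso (phi0 F).

Definition is_strict_monoidal_functor (A B : MonCat) (F : MonFunData A B) : Prop :=
  is_monoidal_functor F /\
  exists (e : forall a b : A, F (tens a b) = tens (F a) (F b)) (e0 : F munit = munit),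
    (forall a b : A, phi F a b = eq_hom (eq_sym (e a b))) /\
    phi0 F = eq_hom (eq_sym e0).

Definition id_mf (A : MonCat) : MonFunData A A :=
  {| fobj := fun a => a;
     fmap := fun a a' f => f;
     phi := fun a b => idm (tens a b);
     phi0 := idm munit |}.

Definition comp_mf (A B C : MonCat) (G : MonFunData B C) (F : MonFunData A B)
  : MonFunData A C :=
  {| fobj := fun a => G (F a);
     fmap := fun a a' f => fmap G (fmap F f);
     phi := fun a b => fmap G (phi F a b) ∘ phi G (F a) (F b);
     phi0 := fmap G (phi0 F) ∘ phi0 G |}.

Definition is_monoidal_nat_iso {A B : MonCat} (F G : MonFunData A B)
  (theta : forall a : A, hom (F a) (G a)) : Prop :=
  (forall (a a' : A) (f : hom a a'), theta a' ∘ fmap F f = fmap G f ∘ theta a) /\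
  (forall a b : A, theta (tens a b) ∘ phi F a b = phi G a b ∘ tensm (theta a) (theta b)) /\
  theta munit ∘ phi0 F = phi0 G /\
  (forall a : A, is_iso (theta a)).
Arguments is_monoidal_nat_iso {A B} F G theta.

Definition monoidally_equivalent (A B : MonCat) : Prop :=
  exists (F : MonFunData A B) (G : MonFunData B A),
    is_strong_monoidal_functor F /\ is_strong_monoidal_functor G /\
    (exists eta : forall a : A, hom (id_mf A a) (comp_mf G F a),
        is_monoidal_nat_iso (id_mf A) (comp_mf G F) eta) /\
    (exists eps : forall b : B, hom (comp_mf F G b) (id_mf B b),
        is_monoidal_nat_iso (comp_mf F G) (id_mf B) eps).

Definition is_surjective_equivalence (A B : MonCat) (F : MonFunData A B) : Prop :=
  (forall b : B, exists a : A, F a = b) /\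
  (forall (a a' : A) (g : hom (F a) (F a')), exists f : hom a a', fmap F f = g) /\
  (forall (a a' : A) (f g : hom a a'), fmap F f = fmap F g -> f = g).

From Stdlib Require Import IndefiniteDescription.

(** Forward direction: the functor [F : A -> B] of a monoidal equivalence is strong monoidal, fully
    faithful and essentially surjective.  Let [C] be the category of triples
    [(a, b, F a ≅ b)] with the hom-sets and tensor structure of [A]; the tensor of
    two triples pairs [a ⊗ a'] with [b ⊗ b'] through [phi^-1].  Both projections
    are then strict by construction, and surjective equivalences because every
    [b] is isomorphic to some [F a] and [F] is fully faithful.

    Backward direction: a strict monoidal surjective equivalence is a strong
    monoidal, fully faithful, essentially surjective functor, hence part of a
    monoidal equivalence (its quasi-inverse is transported along [F] using full
    faithfulness, and its coherence maps are the preimages of the obvious ones).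
    So [A ≃ C ≃ B], and monoidal equivalence is transitive. *)

Lemma compA {C : Category} {a b c d : C} (f : hom a b) (g : hom b c) (h : hom c d) :
  h ∘ (g ∘ f) = h ∘ g ∘ f.
Proof. apply comp_assoc. Qed.

Lemma is_iso_id {C : Category} (a : C) : is_iso (idm a).
Proof. exists (idm a); split; apply comp_idl. Qed.

Lemma is_iso_comp {C : Category} {a b c : C} (f : hom a b) (g : hom b c) :
  is_iso f -> is_iso g -> is_iso (g ∘ f).
Proof.
  intros [f' [Hf'f Hff']] [g' [Hg'g Hgg']]. exists (f' ∘ g'); split.
  - rewrite compA, <- (compA g g' f'), Hg'g, comp_idr. exact Hf'f.
  - rewrite compA, <- (compA f' f g), Hff', comp_idr. exact Hgg'.
Qed.

Lemma iso_monic {C : Category} {a b c : C} (f : hom b c) (x y : hom a b) :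
  is_iso f -> f ∘ x = f ∘ y -> x = y.
Proof.
  intros [f' [Hf'f _]] E.
  rewrite <- (comp_idl x), <- (comp_idl y), <- Hf'f, <- !compA, E. reflexivity.
Qed.

Lemma iso_epic {C : Category} {a b c : C} (f : hom a b) (x y : hom b c) :
  is_iso f -> x ∘ f = y ∘ f -> x = y.
Proof.
  intros [f' [_ Hff']] E.
  rewrite <- (comp_idr x), <- (comp_idr y), <- Hff', !compA, E. reflexivity.
Qed.

Lemma eq_hom_is_iso (C : Category) (a b : C) (e : a = b) : is_iso (eq_hom e).
Proof. destruct e. apply is_iso_id. Qed.

Definition inv {C : Category} {a b : C} {f : hom a b} (H : is_iso f) : hom b a :=
  proj1_sig (constructive_indefinite_description _ H).

Lemma inv_comp {C : Category} {a b : C} {f : hom a b} (H : is_iso f) :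
  inv H ∘ f = idm a.
Proof. unfold inv. destruct (constructive_indefinite_description _ H) as [g [Hgf Hfg]]. exact Hgf. Qed.

Lemma comp_inv {C : Category} {a b : C} {f : hom a b} (H : is_iso f) :
  f ∘ inv H = idm b.
Proof. unfold inv. destruct (constructive_indefinite_description _ H) as [g [Hgf Hfg]]. exact Hfg. Qed.

Lemma is_iso_inv {C : Category} {a b : C} {f : hom a b} (H : is_iso f) : is_iso (inv H).
Proof. exists f; split; [apply comp_inv | apply inv_comp]. Qed.

(* Composites are kept left-associated.  The [_post] variants of equations below
   carry an arbitrary postcomposed [z], so that they rewrite inside such a
   composite; [with_postcomp] prefixes both sides of the goal with an identity
   for the same purpose. *)
Ltac reassoc := repeat rewrite compA.
Ltac with_postcomp := apply (iso_monic (idm _)); [apply is_iso_id |]; reassoc.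

Lemma inv_comp_post {C : Category} {a b : C} {f : hom a b} (H : is_iso f) X (z : hom a X) :
  z ∘ inv H ∘ f = z.
Proof. rewrite <- compA, inv_comp. apply comp_idr. Qed.

Lemma comp_inv_post {C : Category} {a b : C} {f : hom a b} (H : is_iso f) X (z : hom b X) :
  z ∘ f ∘ inv H = z.
Proof. rewrite <- compA, comp_inv. apply comp_idr. Qed.

Section MonoidalCategory.
Context {M : MonCat}.

Lemma is_iso_tensm {a a' b b' : M} (f : hom a a') (g : hom b b') :
  is_iso f -> is_iso g -> is_iso (tensm f g).
Proof.
  intros [f' [H1 H2]] [g' [H3 H4]]. exists (tensm f' g'); split;
  rewrite <- tensm_comp; [rewrite H1, H3 | rewrite H2, H4]; apply tensm_id.
Qed.

Lemma tensm_comp_post {a a' a'' b b' b'' : M} (f : hom a a') (f' : hom a' a'')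
    (g : hom b b') (g' : hom b' b'') X (z : hom _ X) :
  z ∘ tensm f' g' ∘ tensm f g = z ∘ tensm (f' ∘ f) (g' ∘ g).
Proof. rewrite tensm_comp. symmetry; apply compA. Qed.

Lemma tensm_compl {a a' a'' b : M} (f : hom a a') (f' : hom a' a'') :
  tensm (f' ∘ f) (idm b) = tensm f' (idm b) ∘ tensm f (idm b).
Proof. rewrite <- tensm_comp, comp_idl. reflexivity. Qed.

Lemma tensm_compr {a b b' b'' : M} (g : hom b b') (g' : hom b' b'') :
  tensm (idm a) (g' ∘ g) = tensm (idm a) g' ∘ tensm (idm a) g.
Proof. rewrite <- tensm_comp, comp_idl. reflexivity. Qed.

Lemma tensm_split_l {a a' b b' : M} (f : hom a a') (g : hom b b') :
  tensm f g = tensm (idm a') g ∘ tensm f (idm b).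
Proof. rewrite <- tensm_comp, comp_idl, comp_idr. reflexivity. Qed.

Lemma tensm_split_r {a a' b b' : M} (f : hom a a') (g : hom b b') :
  tensm f g = tensm f (idm b') ∘ tensm (idm a) g.
Proof. rewrite <- tensm_comp, comp_idl, comp_idr. reflexivity. Qed.

Lemma assoc_nat_post {a a' b b' c c' : M} (f : hom a a') (g : hom b b') (h : hom c c')
    X (z : hom _ X) :
  z ∘ tensm f (tensm g h) ∘ assoc a b c = z ∘ assoc a' b' c' ∘ tensm (tensm f g) h.
Proof. rewrite <- !compA, assoc_nat. reflexivity. Qed.

Lemma lunit_nat_post {a a' : M} (f : hom a a') X (z : hom _ X) :
  z ∘ lunit a' ∘ tensm (idm munit) f = z ∘ f ∘ lunit a.
Proof. rewrite <- !compA, lunit_nat. reflexivity. Qed.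

Lemma runit_nat_post {a a' : M} (f : hom a a') X (z : hom _ X) :
  z ∘ runit a' ∘ tensm f (idm munit) = z ∘ f ∘ runit a.
Proof. rewrite <- !compA, runit_nat. reflexivity. Qed.

End MonoidalCategory.

Section MonoidalFunctor.
Context {A B : MonCat} {F : MonFunData A B} (HF : is_monoidal_functor F).

Lemma fmap_id (a : A) : fmap F (idm a) = idm (F a).
Proof. apply HF. Qed.

Lemma fmap_comp (a b c : A) (f : hom a b) (g : hom b c) :
  fmap F (g ∘ f) = fmap F g ∘ fmap F f.
Proof. apply HF. Qed.

Lemma phi_nat (a a' b b' : A) (f : hom a a') (g : hom b b') :
  fmap F (tensm f g) ∘ phi F a b = phi F a' b' ∘ tensm (fmap F f) (fmap F g).
Proof. apply HF. Qed.

Lemma phi_assoc (a b c : A) :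
  fmap F (assoc a b c) ∘ phi F (tens a b) c ∘ tensm (phi F a b) (idm (F c))
  = phi F a (tens b c) ∘ tensm (idm (F a)) (phi F b c) ∘ assoc (F a) (F b) (F c).
Proof. apply HF. Qed.

Lemma phi_lunit (a : A) :
  fmap F (lunit a) ∘ phi F munit a ∘ tensm (phi0 F) (idm (F a)) = lunit (F a).
Proof. apply HF. Qed.

Lemma phi_runit (a : A) :
  fmap F (runit a) ∘ phi F a munit ∘ tensm (idm (F a)) (phi0 F) = runit (F a).
Proof. apply HF. Qed.

Lemma fmap_is_iso (a b : A) (f : hom a b) : is_iso f -> is_iso (fmap F f).
Proof.
  intros [g [H1 H2]]. exists (fmap F g); split; rewrite <- fmap_comp, ?H1, ?H2; apply fmap_id.
Qed.

Lemma fmap_comp_post (a b c : A) (f : hom a b) (g : hom b c) X (z : hom (F c) X) :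
  z ∘ fmap F g ∘ fmap F f = z ∘ fmap F (g ∘ f).
Proof. rewrite fmap_comp. symmetry; apply compA. Qed.

Lemma phi_nat_post (a a' b b' : A) (f : hom a a') (g : hom b b') X (z : hom _ X) :
  z ∘ phi F a' b' ∘ tensm (fmap F f) (fmap F g) = z ∘ fmap F (tensm f g) ∘ phi F a b.
Proof. rewrite <- !compA, phi_nat. reflexivity. Qed.

Lemma phi_assoc_post (a b c : A) X (z : hom _ X) :
  z ∘ fmap F (assoc a b c) ∘ phi F (tens a b) c ∘ tensm (phi F a b) (idm (F c))
  = z ∘ phi F a (tens b c) ∘ tensm (idm (F a)) (phi F b c) ∘ assoc (F a) (F b) (F c).
Proof. rewrite <- !compA; f_equal; rewrite ?compA; apply phi_assoc. Qed.

Lemma phi_lunit_post (a : A) X (z : hom _ X) :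
  z ∘ fmap F (lunit a) ∘ phi F munit a ∘ tensm (phi0 F) (idm (F a)) = z ∘ lunit (F a).
Proof. rewrite <- !compA; f_equal; rewrite ?compA; apply phi_lunit. Qed.

Lemma phi_runit_post (a : A) X (z : hom _ X) :
  z ∘ fmap F (runit a) ∘ phi F a munit ∘ tensm (idm (F a)) (phi0 F) = z ∘ runit (F a).
Proof. rewrite <- !compA; f_equal; rewrite ?compA; apply phi_runit. Qed.

End MonoidalFunctor.

Lemma comp_mf_monoidal {A B C : MonCat} (G : MonFunData B C) (F : MonFunData A B) :
  is_monoidal_functor F -> is_monoidal_functor G -> is_monoidal_functor (comp_mf G F).
Proof.
  intros HF HG. unfold is_monoidal_functor; simpl.
  split; [|split; [|split; [|split; [|split]]]].
  - intros a. rewrite (fmap_id HF), (fmap_id HG). reflexivity.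
  - intros. rewrite (fmap_comp HF), (fmap_comp HG). reflexivity.
  - intros. with_postcomp.
    rewrite (fmap_comp_post HG), (phi_nat HF), <- (fmap_comp_post HG), (phi_nat_post HG).
    reflexivity.
  - intros a b c. with_postcomp.
    rewrite tensm_compl, tensm_compr. reassoc.
    rewrite <- (fmap_id HG (F c)), (phi_nat_post HG), !(fmap_comp_post HG). reassoc.
    rewrite (phi_assoc HF), !(fmap_comp HG). reassoc.
    rewrite (fmap_id HG (F c)), (phi_assoc_post HG), <- (fmap_id HG (F a)), (phi_nat_post HG).
    reflexivity.
  - intros a. with_postcomp.
    rewrite tensm_compl. reassoc.
    rewrite <- (fmap_id HG (F a)), (phi_nat_post HG), !(fmap_comp_post HG). reassoc.
    rewrite (phi_lunit HF), (fmap_id HG (F a)), (phi_lunit_post HG). reflexivity.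
  - intros a. with_postcomp.
    rewrite tensm_compr. reassoc.
    rewrite <- (fmap_id HG (F a)), (phi_nat_post HG), !(fmap_comp_post HG). reassoc.
    rewrite (phi_runit HF), (fmap_id HG (F a)), (phi_runit_post HG). reflexivity.
Qed.

Lemma comp_mf_strong {A B C : MonCat} (G : MonFunData B C) (F : MonFunData A B) :
  is_strong_monoidal_functor F -> is_strong_monoidal_functor G ->
  is_strong_monoidal_functor (comp_mf G F).
Proof.
  intros [HF [HF1 HF0]] [HG [HG1 HG0]].
  split; [apply comp_mf_monoidal; auto | split; simpl].
  - intros. apply is_iso_comp; auto. apply (fmap_is_iso HG); auto.
  - apply is_iso_comp; auto. apply (fmap_is_iso HG); auto.
Qed.

Lemma strict_is_strong {A B : MonCat} {P : MonFunData A B} :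
  is_strict_monoidal_functor P -> is_strong_monoidal_functor P.
Proof.
  intros [HP [e [e0 [He He0]]]]. split; [exact HP | split].
  - intros. rewrite He. apply eq_hom_is_iso.
  - rewrite He0. apply eq_hom_is_iso.
Qed.

Definition mnat_isomorphic {A B : MonCat} (F G : MonFunData A B) : Prop :=
  exists theta, is_monoidal_nat_iso F G theta.

Section MonoidalNatIso.
Context {A B : MonCat} {F G : MonFunData A B} {theta : forall a, hom (F a) (G a)}
  (H : is_monoidal_nat_iso F G theta).

Lemma mnat_nat (a a' : A) (f : hom a a') : theta a' ∘ fmap F f = fmap G f ∘ theta a.
Proof. apply H. Qed.

Lemma mnat_tens (a b : A) :
  theta (tens a b) ∘ phi F a b = phi G a b ∘ tensm (theta a) (theta b).
Proof. apply H. Qed.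

Lemma mnat_unit : theta munit ∘ phi0 F = phi0 G.
Proof. apply H. Qed.

Lemma mnat_is_iso a : is_iso (theta a).
Proof. apply H. Qed.

Lemma mnat_nat_post (a a' : A) (f : hom a a') X (z : hom _ X) :
  z ∘ theta a' ∘ fmap F f = z ∘ fmap G f ∘ theta a.
Proof. rewrite <- !compA, mnat_nat. reflexivity. Qed.

Lemma mnat_tens_post (a b : A) X (z : hom _ X) :
  z ∘ theta (tens a b) ∘ phi F a b = z ∘ phi G a b ∘ tensm (theta a) (theta b).
Proof. rewrite <- !compA, mnat_tens. reflexivity. Qed.

Lemma mnat_unit_post X (z : hom _ X) : z ∘ theta munit ∘ phi0 F = z ∘ phi0 G.
Proof. rewrite <- !compA, mnat_unit. reflexivity. Qed.

End MonoidalNatIso.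

Lemma mnat_isomorphic_sym {A B : MonCat} (F G : MonFunData A B) :
  mnat_isomorphic F G -> mnat_isomorphic G F.
Proof.
  intros [theta H]. exists (fun a => inv (mnat_is_iso H a)). split; [|split; [|split]].
  - intros a a' f. apply (iso_monic (theta a')); [apply (mnat_is_iso H) |]. reassoc.
    rewrite comp_inv, comp_idl, (mnat_nat H), comp_inv_post. reflexivity.
  - intros a b. apply (iso_monic (theta (tens a b))); [apply (mnat_is_iso H) |]. reassoc.
    rewrite comp_inv, comp_idl, (mnat_tens H), tensm_comp_post, !comp_inv, tensm_id, comp_idr.
    reflexivity.
  - apply (iso_monic (theta munit)); [apply (mnat_is_iso H) |]. reassoc.
    rewrite comp_inv, comp_idl, (mnat_unit H). reflexivity.
  - intros; apply is_iso_inv.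
Qed.

Lemma mnat_isomorphic_trans {A B : MonCat} (F G K : MonFunData A B) :
  mnat_isomorphic F G -> mnat_isomorphic G K -> mnat_isomorphic F K.
Proof.
  intros [theta H] [theta' H']. exists (fun a => theta' a ∘ theta a).
  split; [|split; [|split]].
  - intros a a' f. with_postcomp. rewrite (mnat_nat_post H), (mnat_nat_post H'). reflexivity.
  - intros a b. with_postcomp.
    rewrite (mnat_tens_post H), (mnat_tens_post H'), tensm_comp_post. reflexivity.
  - with_postcomp. rewrite (mnat_unit_post H), (mnat_unit_post H'). reflexivity.
  - intros; apply is_iso_comp; [apply (mnat_is_iso H) | apply (mnat_is_iso H')].
Qed.

Lemma mnat_isomorphic_whisker_r {A B C : MonCat} (F G : MonFunData A B) (K : MonFunData C A) :
  mnat_isomorphic F G -> mnat_isomorphic (comp_mf F K) (comp_mf G K).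
Proof.
  intros [theta H]. exists (fun c => theta (K c)). split; [|split; [|split]]; simpl.
  - intros. apply (mnat_nat H).
  - intros a b. with_postcomp. rewrite (mnat_nat_post H), (mnat_tens_post H). reflexivity.
  - with_postcomp. rewrite (mnat_nat_post H), (mnat_unit_post H). reflexivity.
  - intros; apply (mnat_is_iso H).
Qed.

Lemma mnat_isomorphic_whisker_l {A B D : MonCat} (F G : MonFunData A B) (K : MonFunData B D) :
  is_monoidal_functor K -> mnat_isomorphic F G -> mnat_isomorphic (comp_mf K F) (comp_mf K G).
Proof.
  intros HK [theta H]. exists (fun a => fmap K (theta a)). split; [|split; [|split]]; simpl.
  - intros. rewrite <- !(fmap_comp HK), (mnat_nat H). reflexivity.
  - intros a b. with_postcomp.
    rewrite (fmap_comp_post HK), (mnat_tens H), <- (fmap_comp_post HK), (phi_nat_post HK).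
    reflexivity.
  - with_postcomp. rewrite (fmap_comp_post HK), (mnat_unit H). reflexivity.
  - intros; apply (fmap_is_iso HK), (mnat_is_iso H).
Qed.

Lemma comp_mf_assoc {A B C D : MonCat} (H : MonFunData C D) (G : MonFunData B C)
    (F : MonFunData A B) :
  is_monoidal_functor H -> mnat_isomorphic (comp_mf (comp_mf H G) F) (comp_mf H (comp_mf G F)).
Proof.
  intros HH. exists (fun a => idm _). split; [|split; [|split]]; simpl.
  - intros. rewrite comp_idl, comp_idr. reflexivity.
  - intros. rewrite tensm_id, comp_idl, comp_idr, (fmap_comp HH). apply compA.
  - rewrite comp_idl, (fmap_comp HH). apply compA.
  - intros; apply is_iso_id.
Qed.

Lemma comp_mf_id_l {A B : MonCat} (F : MonFunData A B) : mnat_isomorphic (comp_mf (id_mf B) F) F.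
Proof.
  exists (fun a => idm _). split; [|split; [|split]]; simpl.
  - intros. rewrite comp_idl, comp_idr. reflexivity.
  - intros. rewrite tensm_id, comp_idl, !comp_idr. reflexivity.
  - rewrite !comp_idl, comp_idr. reflexivity.
  - intros; apply is_iso_id.
Qed.

Lemma monoidally_equivalent_sym (A B : MonCat) :
  monoidally_equivalent A B -> monoidally_equivalent B A.
Proof.
  intros [F [G [HF [HG [[eta Heta] [eps Heps]]]]]].
  exists G, F. split; [exact HG | split; [exact HF | split]].
  - apply mnat_isomorphic_sym. exists eps; exact Heps.
  - apply mnat_isomorphic_sym. exists eta; exact Heta.
Qed.

Lemma monoidally_equivalent_trans (A B C : MonCat) :
  monoidally_equivalent A C -> monoidally_equivalent C B -> monoidally_equivalent A B.
Proof.
  intros [F1 [G1 [HF1 [HG1 [Heta1 Heps1]]]]] [F2 [G2 [HF2 [HG2 [Heta2 Heps2]]]]].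
  exists (comp_mf F2 F1), (comp_mf G1 G2).
  split; [apply comp_mf_strong; auto | split; [apply comp_mf_strong; auto | split]].
  - apply (mnat_isomorphic_trans _ _ _ Heta1).
    apply (mnat_isomorphic_trans _ (comp_mf G1 (comp_mf (id_mf C) F1))).
    { apply mnat_isomorphic_whisker_l; [apply HG1 |]. apply mnat_isomorphic_sym, comp_mf_id_l. }
    apply (mnat_isomorphic_trans _ (comp_mf G1 (comp_mf (comp_mf G2 F2) F1))).
    { apply mnat_isomorphic_whisker_l; [apply HG1 |]. apply mnat_isomorphic_whisker_r, Heta2. }
    apply (mnat_isomorphic_trans _ (comp_mf G1 (comp_mf G2 (comp_mf F2 F1)))).
    { apply mnat_isomorphic_whisker_l; [apply HG1 |]. apply comp_mf_assoc, HG2. }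
    apply mnat_isomorphic_sym, comp_mf_assoc, HG1.
  - apply (mnat_isomorphic_trans _ (comp_mf F2 (comp_mf F1 (comp_mf G1 G2)))).
    { apply comp_mf_assoc, HF2. }
    apply (mnat_isomorphic_trans _ (comp_mf F2 (comp_mf (comp_mf F1 G1) G2))).
    { apply mnat_isomorphic_whisker_l; [apply HF2 |]. apply mnat_isomorphic_sym, comp_mf_assoc, HF1. }
    apply (mnat_isomorphic_trans _ (comp_mf F2 (comp_mf (id_mf C) G2))).
    { apply mnat_isomorphic_whisker_l; [apply HF2 |]. apply mnat_isomorphic_whisker_r, Heps1. }
    apply (mnat_isomorphic_trans _ (comp_mf F2 G2)); [| exact Heps2].
    apply mnat_isomorphic_whisker_l; [apply HF2 |]. apply comp_mf_id_l.
Qed.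

Section StrongMonoidalFunctor.
Context {A B : MonCat} {F : MonFunData A B} (HF : is_strong_monoidal_functor F).

Let HFm : is_monoidal_functor F := proj1 HF.

Definition phi_inv (a b : A) : hom (F (tens a b)) (tens (F a) (F b)) :=
  inv (proj1 (proj2 HF) a b).
Definition phi0_inv : hom (F munit) munit := inv (proj2 (proj2 HF)).

Lemma is_iso_phi (a b : A) : is_iso (phi F a b).
Proof. apply HF. Qed.

Lemma is_iso_phi0 : is_iso (phi0 F).
Proof. apply HF. Qed.

Lemma phi_inv_phi (a b : A) : phi_inv a b ∘ phi F a b = idm _.
Proof. apply inv_comp. Qed.

Lemma phi_phi_inv (a b : A) : phi F a b ∘ phi_inv a b = idm _.
Proof. apply comp_inv. Qed.

Lemma phi0_inv_phi0 : phi0_inv ∘ phi0 F = idm _.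
Proof. apply inv_comp. Qed.

Lemma phi0_phi0_inv : phi0 F ∘ phi0_inv = idm _.
Proof. apply comp_inv. Qed.

Lemma is_iso_phi_inv (a b : A) : is_iso (phi_inv a b).
Proof. apply is_iso_inv. Qed.

Lemma is_iso_phi0_inv : is_iso phi0_inv.
Proof. apply is_iso_inv. Qed.

Lemma phi_inv_phi_post (a b : A) X (z : hom _ X) : z ∘ phi_inv a b ∘ phi F a b = z.
Proof. apply inv_comp_post. Qed.

Lemma phi_phi_inv_post (a b : A) X (z : hom _ X) : z ∘ phi F a b ∘ phi_inv a b = z.
Proof. apply comp_inv_post. Qed.

Lemma phi0_phi0_inv_post X (z : hom _ X) : z ∘ phi0 F ∘ phi0_inv = z.
Proof. apply comp_inv_post. Qed.

Lemma fmap_tensm {a a' b b' : A} (f : hom a a') (g : hom b b') :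
  fmap F (tensm f g) = phi F a' b' ∘ tensm (fmap F f) (fmap F g) ∘ phi_inv a b.
Proof. rewrite <- (phi_nat HFm), phi_phi_inv_post. reflexivity. Qed.

Lemma fmap_assoc_post (a b c : A) X (z : hom _ X) :
  z ∘ phi_inv a (tens b c) ∘ fmap F (assoc a b c) =
  z ∘ tensm (idm (F a)) (phi F b c) ∘ assoc (F a) (F b) (F c)
    ∘ tensm (phi_inv a b) (idm (F c)) ∘ phi_inv (tens a b) c.
Proof.
  apply (iso_epic (phi F (tens a b) c ∘ tensm (phi F a b) (idm (F c)))).
  { apply is_iso_comp; [apply is_iso_tensm; [apply is_iso_phi | apply is_iso_id] | apply is_iso_phi]. }
  reassoc. rewrite (phi_assoc_post HFm), !phi_inv_phi_post, tensm_comp_post, phi_inv_phi,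
    comp_idl, tensm_id, comp_idr.
  reflexivity.
Qed.

Lemma fmap_lunit_post (a : A) X (z : hom _ X) :
  z ∘ fmap F (lunit a) = z ∘ lunit (F a) ∘ tensm phi0_inv (idm (F a)) ∘ phi_inv munit a.
Proof.
  apply (iso_epic (phi F munit a ∘ tensm (phi0 F) (idm (F a)))).
  { apply is_iso_comp; [apply is_iso_tensm; [apply is_iso_phi0 | apply is_iso_id] | apply is_iso_phi]. }
  reassoc. rewrite (phi_lunit_post HFm), phi_inv_phi_post, tensm_comp_post, comp_idl,
    phi0_inv_phi0, tensm_id, comp_idr.
  reflexivity.
Qed.

Lemma fmap_runit_post (a : A) X (z : hom _ X) :
  z ∘ fmap F (runit a) = z ∘ runit (F a) ∘ tensm (idm (F a)) phi0_inv ∘ phi_inv a munit.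
Proof.
  apply (iso_epic (phi F a munit ∘ tensm (idm (F a)) (phi0 F))).
  { apply is_iso_comp; [apply is_iso_tensm; [apply is_iso_id | apply is_iso_phi0] | apply is_iso_phi]. }
  reassoc. rewrite (phi_runit_post HFm), phi_inv_phi_post, tensm_comp_post, comp_idl,
    phi0_inv_phi0, tensm_id, comp_idr.
  reflexivity.
Qed.

End StrongMonoidalFunctor.

Definition full {A B : MonCat} (F : MonFunData A B) : Prop :=
  forall (a a' : A) (g : hom (F a) (F a')), exists f : hom a a', fmap F f = g.

Definition faithful {A B : MonCat} (F : MonFunData A B) : Prop :=
  forall (a a' : A) (f g : hom a a'), fmap F f = fmap F g -> f = g.

Definition ess_surj {A B : MonCat} (F : MonFunData A B) : Prop :=
  forall b : B, exists a (u : hom (F a) b), is_iso u.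

Section QuasiInverse.
Context {A B : MonCat} {F : MonFunData A B} (HF : is_strong_monoidal_functor F)
  (HFfull : full F) (HFfaith : faithful F) (HFess : ess_surj F).

Let HFm : is_monoidal_functor F := proj1 HF.

Definition preimage {a a' : A} (g : hom (F a) (F a')) : hom a a' :=
  proj1_sig (constructive_indefinite_description _ (HFfull a a' g)).

Lemma fmap_preimage {a a' : A} (g : hom (F a) (F a')) : fmap F (preimage g) = g.
Proof. unfold preimage. destruct (constructive_indefinite_description _ (HFfull a a' g)); auto. Qed.

Lemma is_iso_preimage {a a' : A} (g : hom (F a) (F a')) : is_iso g -> is_iso (preimage g).
Proof.
  intros [g' [H1 H2]]. exists (preimage g'); split; apply HFfaith;
  rewrite (fmap_comp HFm), !fmap_preimage, (fmap_id HFm); assumption.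
Qed.

Definition rep (b : B) : A := proj1_sig (constructive_indefinite_description _ (HFess b)).

Definition rep_iso (b : B) : hom (F (rep b)) b :=
  proj1_sig (constructive_indefinite_description _
     (proj2_sig (constructive_indefinite_description _ (HFess b)))).

Lemma is_iso_rep_iso b : is_iso (rep_iso b).
Proof.
  unfold rep_iso. destruct (constructive_indefinite_description _
     (proj2_sig (constructive_indefinite_description _ (HFess b)))); auto.
Qed.

Definition rep_inv (b : B) : hom b (F (rep b)) := inv (is_iso_rep_iso b).

Lemma rep_iso_inv b : rep_iso b ∘ rep_inv b = idm b.
Proof. apply comp_inv. Qed.

Lemma rep_inv_iso b : rep_inv b ∘ rep_iso b = idm _.
Proof. apply inv_comp. Qed.

Lemma rep_iso_inv_post b X (z : hom b X) : z ∘ rep_iso b ∘ rep_inv b = z.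
Proof. apply comp_inv_post. Qed.

Lemma rep_inv_iso_post b X (z : hom _ X) : z ∘ rep_inv b ∘ rep_iso b = z.
Proof. apply inv_comp_post. Qed.

Definition quasi_inverse : MonFunData B A :=
  {| fobj := rep;
     fmap := fun b b' g => preimage (rep_inv b' ∘ g ∘ rep_iso b);
     phi := fun b b' =>
       preimage (rep_inv (tens b b') ∘ tensm (rep_iso b) (rep_iso b') ∘ phi_inv HF (rep b) (rep b'));
     phi0 := preimage (rep_inv munit ∘ phi0_inv HF) |}.

Lemma fmap_quasi_inverse {b b' : B} (g : hom b b') :
  fmap F (fmap quasi_inverse g) = rep_inv b' ∘ g ∘ rep_iso b.
Proof. apply fmap_preimage. Qed.

Lemma fmap_phi_quasi_inverse (b b' : B) :
  fmap F (phi quasi_inverse b b') =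
  rep_inv (tens b b') ∘ tensm (rep_iso b) (rep_iso b') ∘ phi_inv HF (rep b) (rep b').
Proof. apply fmap_preimage. Qed.

Lemma fmap_phi0_quasi_inverse : fmap F (phi0 quasi_inverse) = rep_inv munit ∘ phi0_inv HF.
Proof. apply fmap_preimage. Qed.

Lemma quasi_inverse_monoidal : is_monoidal_functor quasi_inverse.
Proof.
  split; [|split; [|split; [|split; [|split]]]]; intros; apply HFfaith.
  - rewrite fmap_quasi_inverse, (fmap_id HFm), comp_idr, rep_inv_iso. reflexivity.
  - rewrite (fmap_comp HFm), !fmap_quasi_inverse. reassoc. rewrite rep_iso_inv_post.
    reflexivity.
  - rewrite !(fmap_comp HFm), fmap_quasi_inverse, fmap_phi_quasi_inverse, (fmap_tensm HF),
      !fmap_quasi_inverse, fmap_phi_quasi_inverse.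
    reassoc. rewrite rep_iso_inv_post, phi_inv_phi_post, !tensm_comp_post. reassoc.
    rewrite !rep_iso_inv, !comp_idl. reflexivity.
  - rewrite !(fmap_comp HFm), !fmap_quasi_inverse, !fmap_phi_quasi_inverse, !(fmap_tensm HF),
      !fmap_phi_quasi_inverse, !(fmap_id HFm).
    reassoc. rewrite rep_iso_inv_post, !phi_inv_phi_post, !tensm_comp_post. reassoc.
    rewrite !rep_iso_inv, !comp_idl, !comp_idr, fmap_assoc_post, tensm_comp_post. reassoc.
    rewrite phi_inv_phi_post, comp_idr, assoc_nat_post, tensm_comp_post, comp_idr.
    reflexivity.
  - rewrite !(fmap_comp HFm), fmap_quasi_inverse, fmap_phi_quasi_inverse, (fmap_tensm HF),
      fmap_phi0_quasi_inverse, (fmap_id HFm).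
    reassoc. rewrite rep_iso_inv_post, phi_inv_phi_post, !tensm_comp_post. reassoc.
    rewrite !rep_iso_inv, !comp_idl, !comp_idr.
    with_postcomp. rewrite (fmap_lunit_post HF), (tensm_split_l (phi0_inv HF)). reassoc.
    rewrite lunit_nat_post, rep_inv_iso_post. reflexivity.
  - rewrite !(fmap_comp HFm), fmap_quasi_inverse, fmap_phi_quasi_inverse, (fmap_tensm HF),
      fmap_phi0_quasi_inverse, (fmap_id HFm).
    reassoc. rewrite rep_iso_inv_post, phi_inv_phi_post, !tensm_comp_post. reassoc.
    rewrite !rep_iso_inv, !comp_idl, !comp_idr.
    with_postcomp. rewrite (fmap_runit_post HF), (tensm_split_r (rep_iso _) (phi0_inv HF)). reassoc.
    rewrite runit_nat_post, rep_inv_iso_post. reflexivity.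
Qed.

Lemma quasi_inverse_strong : is_strong_monoidal_functor quasi_inverse.
Proof.
  split; [apply quasi_inverse_monoidal | split].
  - intros. apply is_iso_preimage. repeat apply is_iso_comp.
    + apply is_iso_phi_inv.
    + apply is_iso_tensm; apply is_iso_rep_iso.
    + apply is_iso_inv.
  - apply is_iso_preimage, is_iso_comp; [apply is_iso_phi0_inv | apply is_iso_inv].
Qed.

Lemma quasi_inverse_unit :
  mnat_isomorphic (id_mf A) (comp_mf quasi_inverse F).
Proof.
  exists (fun a => preimage (rep_inv (F a))).
  split; [|split; [|split]]; cbn [comp_mf id_mf fobj fmap phi phi0].
  - intros. apply HFfaith. rewrite !(fmap_comp HFm), !fmap_preimage, fmap_quasi_inverse,
      rep_iso_inv_post.
    reflexivity.
  - intros. apply HFfaith.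
    rewrite !(fmap_comp HFm), (fmap_id HFm), (fmap_tensm HF), !fmap_preimage, fmap_quasi_inverse,
      fmap_phi_quasi_inverse.
    reassoc. rewrite rep_iso_inv_post, phi_inv_phi_post, tensm_comp_post, !rep_iso_inv, tensm_id,
      !comp_idr, phi_phi_inv_post.
    reflexivity.
  - apply HFfaith. rewrite !(fmap_comp HFm), (fmap_id HFm), !fmap_preimage, fmap_quasi_inverse,
      fmap_phi0_quasi_inverse.
    reassoc. rewrite rep_iso_inv_post, phi0_phi0_inv_post, comp_idr. reflexivity.
  - intros. apply is_iso_preimage, is_iso_inv.
Qed.

Lemma quasi_inverse_counit :
  mnat_isomorphic (comp_mf F quasi_inverse) (id_mf B).
Proof.
  exists rep_iso. split; [|split; [|split]]; cbn [comp_mf id_mf fobj fmap phi phi0].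
  - intros. rewrite fmap_quasi_inverse. reassoc. rewrite rep_iso_inv, comp_idl. reflexivity.
  - intros. rewrite fmap_phi_quasi_inverse. reassoc.
    rewrite rep_iso_inv, comp_idl, phi_inv_phi_post, comp_idl. reflexivity.
  - rewrite fmap_phi0_quasi_inverse. reassoc. rewrite rep_iso_inv, comp_idl. apply phi0_inv_phi0.
  - apply is_iso_rep_iso.
Qed.

End QuasiInverse.

Theorem strong_full_faithful_ess_surj_equivalence {A B : MonCat} {F : MonFunData A B} :
  is_strong_monoidal_functor F -> full F -> faithful F -> ess_surj F ->
  monoidally_equivalent A B.
Proof.
  intros HF HFfull HFfaith HFess. exists F, (quasi_inverse HF HFfull HFess).
  split; [exact HF | split; [apply quasi_inverse_strong; exact HFfaith | split]].
  - apply quasi_inverse_unit; exact HFfaith.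
  - apply quasi_inverse_counit.
Qed.

Corollary strict_surjective_equivalence_monoidally_equivalent {A B : MonCat}
    {P : MonFunData A B} :
  is_strict_monoidal_functor P -> is_surjective_equivalence P -> monoidally_equivalent A B.
Proof.
  intros HP [Psurj [Pfull Pfaith]].
  apply (strong_full_faithful_ess_surj_equivalence (strict_is_strong HP) Pfull Pfaith).
  intros b. destruct (Psurj b) as [a e]. exists a, (eq_hom e). apply eq_hom_is_iso.
Qed.

Section EquivalenceFunctor.
Context {A B : MonCat} {F : MonFunData A B} {G : MonFunData B A}
  (Hunit : mnat_isomorphic (id_mf A) (comp_mf G F))
  (Hcounit : mnat_isomorphic (comp_mf F G) (id_mf B)).

Lemma counit_faithful : faithful G.
Proof.
  destruct Hcounit as [eps Heps]. intros b b' f g Hfg.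
  apply (iso_epic (eps b)); [apply (mnat_is_iso Heps) |].
  pose proof (mnat_nat Heps _ _ f) as Ef. pose proof (mnat_nat Heps _ _ g) as Eg.
  cbn in Ef, Eg |- *. rewrite <- Ef, <- Eg, Hfg. reflexivity.
Qed.

Lemma unit_faithful : faithful F.
Proof.
  destruct Hunit as [eta Heta]. intros a a' f g Hfg.
  apply (iso_monic (eta a')); [apply (mnat_is_iso Heta) |].
  pose proof (mnat_nat Heta _ _ f) as Ef. pose proof (mnat_nat Heta _ _ g) as Eg.
  cbn in Ef, Eg |- *. rewrite Ef, Eg, Hfg. reflexivity.
Qed.

(* The preimage of [g] is [eta^-1 ∘ G g ∘ eta]; that it maps back to [g] is
   checked after applying the faithful functor [G]. *)
Lemma unit_counit_full : full F.
Proof.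
  destruct Hunit as [eta Heta]. intros a a' g.
  set (eta_inv := inv (mnat_is_iso Heta a')).
  exists (eta_inv ∘ fmap G g ∘ eta a).
  apply counit_faithful, (iso_epic (eta a)); [apply (mnat_is_iso Heta) |].
  pose proof (mnat_nat Heta _ _ (eta_inv ∘ fmap G g ∘ eta a)) as E. cbn in E |- *.
  rewrite <- E. reassoc. unfold eta_inv. rewrite comp_inv, comp_idl. reflexivity.
Qed.

Lemma counit_ess_surj : ess_surj F.
Proof.
  destruct Hcounit as [eps Heps]. intros b. exists (G b), (eps b). apply (mnat_is_iso Heps).
Qed.

End EquivalenceFunctor.

Section IsoComma.
Context {A B : MonCat} {F : MonFunData A B} (HF : is_strong_monoidal_functor F).

Let HFm : is_monoidal_functor F := proj1 HF.

Record iso_comma_ob := IsoCommaOb {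
  obA : A;
  obB : B;
  link : hom (F obA) obB;
  unlink : hom obB (F obA);
  unlink_link : unlink ∘ link = idm _;
  link_unlink : link ∘ unlink = idm _
}.
Arguments IsoCommaOb {obA obB link unlink}.

Lemma unlink_link_post (x : iso_comma_ob) X (z : hom _ X) : z ∘ unlink x ∘ link x = z.
Proof. rewrite <- compA, unlink_link. apply comp_idr. Qed.

Lemma link_unlink_post (x : iso_comma_ob) X (z : hom _ X) : z ∘ link x ∘ unlink x = z.
Proof. rewrite <- compA, link_unlink. apply comp_idr. Qed.

Lemma is_iso_link (x : iso_comma_ob) : is_iso (link x).
Proof. exists (unlink x); split; [apply unlink_link | apply link_unlink]. Qed.

Lemma is_iso_unlink (x : iso_comma_ob) : is_iso (unlink x).
Proof. exists (link x); split; [apply link_unlink | apply unlink_link]. Qed.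

Definition iso_comma_cat : Category :=
  {| ob := iso_comma_ob;
     hom := fun x y => hom (obA x) (obA y);
     idm := fun x => idm (obA x);
     comp := fun x y z g f => g ∘ f;
     comp_idl := fun x y f => comp_idl f;
     comp_idr := fun x y f => comp_idr f;
     comp_assoc := fun a b c d f g h => comp_assoc f g h |}.

Definition tens_link (x y : iso_comma_ob) :
  hom (F (tens (obA x) (obA y))) (tens (obB x) (obB y)) :=
  tensm (link x) (link y) ∘ phi_inv HF (obA x) (obA y).

Definition tens_unlink (x y : iso_comma_ob) :
  hom (tens (obB x) (obB y)) (F (tens (obA x) (obA y))) :=
  phi F (obA x) (obA y) ∘ tensm (unlink x) (unlink y).

Lemma tens_unlink_link x y : tens_unlink x y ∘ tens_link x y = idm _.
Proof.
  unfold tens_link, tens_unlink. reassoc.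
  rewrite tensm_comp_post, !unlink_link, tensm_id, comp_idr. apply phi_phi_inv.
Qed.

Lemma tens_link_unlink x y : tens_link x y ∘ tens_unlink x y = idm _.
Proof.
  unfold tens_link, tens_unlink. reassoc.
  rewrite phi_inv_phi_post, <- tensm_comp, !link_unlink. apply tensm_id.
Qed.

Definition tens_ob (x y : iso_comma_ob) : iso_comma_ob :=
  IsoCommaOb (tens_unlink_link x y) (tens_link_unlink x y).

Definition unit_ob : iso_comma_ob :=
  IsoCommaOb (phi0_phi0_inv HF) (phi0_inv_phi0 HF).

Definition iso_comma : MonCat :=
  {| mcat := iso_comma_cat; tens := tens_ob;
     tensm := fun (a a' b b' : iso_comma_cat) (f : hom a a') (g : hom b b') =>
       @tensm A _ _ _ _ f g;
     munit := unit_ob;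
     assoc := fun a b c => assoc (obA a) (obA b) (obA c);
     lunit := fun a => lunit (obA a);
     runit := fun a => runit (obA a);
     tensm_id := ltac:(intros; apply tensm_id);
     tensm_comp := ltac:(intros; apply tensm_comp);
     assoc_nat := ltac:(intros; apply assoc_nat);
     lunit_nat := ltac:(intros; apply lunit_nat);
     runit_nat := ltac:(intros; apply runit_nat);
     assoc_iso := ltac:(intros; apply assoc_iso);
     lunit_iso := ltac:(intros; apply lunit_iso);
     runit_iso := ltac:(intros; apply runit_iso);
     pentagon := ltac:(intros; apply pentagon);
     triangle := ltac:(intros; apply triangle) |}.

Definition proj_A : MonFunData iso_comma A :=
  {| fobj := fun x : iso_comma => obA x;
     fmap := fun (x y : iso_comma) (f : hom x y) => (f : hom (obA x) (obA y));
     phi := fun (x y : iso_comma) => idm (tens (obA x) (obA y));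
     phi0 := idm munit |}.

Definition proj_B : MonFunData iso_comma B :=
  {| fobj := fun x : iso_comma => obB x;
     fmap := fun (x y : iso_comma) (f : hom x y) =>
       link y ∘ fmap F (f : hom (obA x) (obA y)) ∘ unlink x;
     phi := fun (x y : iso_comma) => idm (tens (obB x) (obB y));
     phi0 := idm munit |}.

Lemma proj_A_strict : is_strict_monoidal_functor proj_A.
Proof.
  split.
  - split; [|split; [|split; [|split; [|split]]]]; intros; cbn;
      rewrite ?tensm_id, ?comp_idl, ?comp_idr; reflexivity.
  - exists (fun x y => eq_refl), eq_refl. split; intros; reflexivity.
Qed.

Lemma proj_A_surjective_equivalence : is_surjective_equivalence proj_A.
Proof.
  split; [|split].
  - intros a. exists (IsoCommaOb (link := idm (F a)) (comp_idl _) (comp_idl _)). reflexivity.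
  - intros x y g. exists g. reflexivity.
  - intros x y f g Hfg. exact Hfg.
Qed.

Lemma proj_B_monoidal : is_monoidal_functor proj_B.
Proof.
  split; [|split; [|split; [|split; [|split]]]]; cbn; unfold tens_link, tens_unlink.
  - intros. rewrite (fmap_id HFm), comp_idr. apply link_unlink.
  - intros. rewrite (fmap_comp HFm). reassoc. rewrite unlink_link_post. reflexivity.
  - intros. rewrite comp_idr, comp_idl, (fmap_tensm HF). reassoc.
    rewrite !phi_inv_phi_post, <- !tensm_comp. reflexivity.
  - intros. rewrite !tensm_id, comp_idl, !comp_idr. cbn [link unlink tens_ob obA obB].
    unfold tens_link, tens_unlink. with_postcomp.
    rewrite (fmap_assoc_post HF), phi_inv_phi_post, !tensm_comp_post. reassoc.
    rewrite !phi_inv_phi_post, !comp_idl, !comp_idr, phi_inv_phi, comp_idl, <- assoc_nat,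
      <- compA, <- !tensm_comp, !link_unlink, !tensm_id.
    apply comp_idr.
  - intros. rewrite !tensm_id, !comp_idr. cbn [link unlink tens_ob unit_ob obA obB].
    unfold tens_link, tens_unlink. with_postcomp.
    rewrite (fmap_lunit_post HF), phi_inv_phi_post, tensm_comp_post, phi0_inv_phi0, !comp_idl,
      <- compA, lunit_nat, compA, link_unlink.
    apply comp_idl.
  - intros. rewrite !tensm_id, !comp_idr. cbn [link unlink tens_ob unit_ob obA obB].
    unfold tens_link, tens_unlink. with_postcomp.
    rewrite (fmap_runit_post HF), phi_inv_phi_post, tensm_comp_post, phi0_inv_phi0, !comp_idl,
      <- compA, runit_nat, compA, link_unlink.
    apply comp_idl.
Qed.

Lemma proj_B_strict : is_strict_monoidal_functor proj_B.
Proof.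
  split; [exact proj_B_monoidal |].
  exists (fun x y => eq_refl), eq_refl. split; intros; reflexivity.
Qed.

Lemma proj_B_surjective_equivalence :
  full F -> faithful F -> ess_surj F -> is_surjective_equivalence proj_B.
Proof.
  intros HFfull HFfaith HFess. split; [|split].
  - intros b. destruct (HFess b) as [a [u Hu]].
    exists (IsoCommaOb (link := u) (inv_comp Hu) (comp_inv Hu)). reflexivity.
  - intros x y g. destruct (HFfull (obA x) (obA y) (unlink y ∘ g ∘ link x)) as [f Hf].
    exists f. cbn. rewrite Hf. reassoc. rewrite link_unlink, comp_idl, link_unlink_post.
    reflexivity.
  - intros x y f g Hfg. cbn in Hfg. apply HFfaith.
    apply (iso_monic (link y)); [apply is_iso_link |].
    apply (iso_epic (unlink x)); [apply is_iso_unlink |].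
    exact Hfg.
Qed.

End IsoComma.

Theorem theoremB (A B : MonCat) :
  monoidally_equivalent A B <->
  exists (C : MonCat) (P : MonFunData C A) (Q : MonFunData C B),
    is_strict_monoidal_functor P /\ is_surjective_equivalence P /\
    is_strict_monoidal_functor Q /\ is_surjective_equivalence Q.
Proof.
  split.
  - intros [F [G [HF [_ [Hunit Hcounit]]]]].
    exists (iso_comma HF), (proj_A HF), (proj_B HF).
    split; [apply proj_A_strict |].
    split; [apply proj_A_surjective_equivalence |].
    split; [apply proj_B_strict |].
    apply proj_B_surjective_equivalence.
    + exact (unit_counit_full Hunit Hcounit).
    + exact (unit_faithful Hunit).
    + exact (counit_ess_surj Hcounit).
  - intros [C [P [Q [HP [HPsurj [HQ HQsurj]]]]]].
    apply (monoidally_equivalent_trans A B C).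
    + apply monoidally_equivalent_sym.
      exact (strict_surjective_equivalence_monoidally_equivalent HP HPsurj).
    + exact (strict_surjective_equivalence_monoidally_equivalent HQ HQsurj).
Qed.
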